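(* Let $L\in\mathbb Z^+$ and let $\mathcal C$ be a linear $[n,k]$ MDS code over $F$ with $k<n$. Write $n-k=(L+1)u+r$ with $u\in\mathbb Z_{\ge0}$ and $r\in\{1,2,\dots,L+1\}$, and suppose $$L\le\binom{k-1+u+r}{k-1}.$$ If $\mathcal C$ is $(\tau,L)$-list decodable (for some $\tau\in\mathbb Z_{\ge0}$), then $\tau\le\frac{L(n-k)}{L+1}$.
   Context: $F=\mathrm{GF}(q)$. For $L\in\mathbb Z^+$ and $\tau\in\mathbb Z_{\ge0}$, a code $\mathcal C\subseteq F^n$ is $(\tau,L)$-list decodable if for every $y\in F^n$ at most $L$ codewords of $\mathcal C$ lie at Hamming distance at most $\tau$ from $y$. *)

From HB Require Import structures.
From mathcomp Require Import all_boot all_order all_algebra.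
Set Implicit Arguments. Unset Strict Implicit. Unset Printing Implicit Defensive.
Import GRing.Theory.

(* Words of length n over F are row vectors 'rV[F]_n; linear codes are
   subspaces {vspace 'rV[F]_n}. *)

Definition hamming (F : finFieldType) (n : nat) (x y : 'rV[F]_n) : nat :=
  #|[set i : 'I_n | x ord0 i != y ord0 i]|.

Definition hweight (F : finFieldType) (n : nat) (x : 'rV[F]_n) : nat :=
  hamming x 0%R.

Definition list_decodable (F : finFieldType) (n : nat)
    (C : {pred 'rV[F]_n}) (tau L : nat) : Prop :=
  forall y : 'rV[F]_n, #|[set c : 'rV[F]_n | (c \in C) && (hamming c y <= tau)]| <= L.

Definition has_min_distance (F : finFieldType) (n : nat)
    (C : {vspace 'rV[F]_n}) (d : nat) : Prop :=
  (forall c, c \in C -> c != 0%R -> d <= hweight c) /\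
  (exists2 c, (c \in C) && (c != 0%R) & hweight c = d).

Definition is_MDS (F : finFieldType) (n : nat) (C : {vspace 'rV[F]_n}) (k : nat) : Prop :=
  \dim C = k /\ has_min_distance C (n - k + 1).

From HB Require Import structures.
From mathcomp Require Import all_boot all_order all_algebra zify.
Set Implicit Arguments. Unset Strict Implicit. Unset Printing Implicit Defensive.
Import GRing.Theory Num.Theory.
Local Open Scope ring_scope.

(* Suppose [L u + r <= tau]; we build a word with [L + 1] codewords in its
   radius-[tau] ball.  Put [m = k - 1 + u + r], so that the [n = m + 1 + L u]
   coordinates split into a prefix of length [m], a position [pos = m] and
   [L] blocks of length [u].  As [L <= binomial m (k - 1)], there are [L]
   distinct [(k - 1)]-subsets [S_i] of the prefix, and the MDS property gives
   codewords [c_i] vanishing on [S_i] with [c_i pos = 1]; since a nonzero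
   codeword has at most [k - 1] zeros, the [c_i] are nonzero and distinct.
   The word that is [0] on the prefix, [1] at [pos] and equal to [c_i] on the
   [i]-th block is at distance [<= L u + 1] from [0] and agrees with [c_i] on
   [S_i], [pos] and block [i], i.e. on [k + u] coordinates.  Hence
   [tau < L u + r], and [r <= L + 1] turns this into the claimed bound. *)

Lemma card_ord_itv n a b :
  (b <= n)%N -> #|[set j : 'I_n | (a <= j < b)%N]| = (b - a)%N.
Proof.
elim: b => [|b IHb] lt_b_n.
  by apply/eqP; rewrite cards_eq0; apply/eqP/setP => j; rewrite !inE ltn0 andbF.
have [le_a_b | lt_b_a] := leqP a b; last first.
  rewrite (_ : (b.+1 - a = 0)%N); last lia.
  by apply/eqP; rewrite cards_eq0; apply/eqP/setP => j; rewrite !inE; lia.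
have -> : [set j : 'I_n | (a <= j < b.+1)%N]
          = Ordinal lt_b_n |: [set j : 'I_n | (a <= j < b)%N].
  by apply/setP => j; rewrite !inE -val_eqE /=; lia.
by rewrite cardsU1 IHb ?inE /= ?ltnn ?andbF; lia.
Qed.

Lemma card_ord_lt n b : (b <= n)%N -> #|[set j : 'I_n | (j < b)%N]| = b.
Proof.
move=> le_b_n; rewrite -[RHS]subn0 -(card_ord_itv 0 le_b_n).
by apply: eq_card => j; rewrite !inE.
Qed.

Lemma draws_family (T : finType) (A : {set T}) (t L : nat) :
  (L <= 'C(#|A|, t))%N ->
  exists S : 'I_L -> {set T},
    injective S /\ forall i, S i \subset A /\ #|S i| = t.
Proof.
move=> le_L_bin.
pose D := enum [set S : {set T} | S \subset A & #|S| == t].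
have size_D : size D = 'C(#|A|, t) by rewrite -cardE cards_draws.
have lt_i_D (i : 'I_L) : (i < size D)%N by rewrite size_D (leq_trans (ltn_ord i)).
exists (fun i => nth set0 D i); split.
  by move=> i j /eqP; rewrite nth_uniq ?enum_uniq // => /eqP/val_inj.
move=> i; have := mem_nth set0 (lt_i_D i).
by rewrite mem_enum inE => /andP[-> /eqP].
Qed.

Section Codewords.

Variables (F : finFieldType) (n : nat).
Implicit Types (C : {vspace 'rV[F]_n}) (c x y : 'rV[F]_n) (S W : {set 'I_n}).

Definition zero_set c : {set 'I_n} := [set j | c ord0 j == 0].

Lemma hammingE x y : hamming x y = (n - #|[set j | x ord0 j == y ord0 j]|)%N.
Proof.
have := cardsC [set j | x ord0 j == y ord0 j]; rewrite card_ord /hamming.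
have -> : ~: [set j | x ord0 j == y ord0 j] = [set j | x ord0 j != y ord0 j].
  by apply/setP => j; rewrite !inE.
by move/(congr1 (subn^~ #|[set j | x ord0 j == y ord0 j]|)); rewrite addKn.
Qed.

Lemma hamming_le_agree x y W :
  W \subset [set j | x ord0 j == y ord0 j] -> (hamming x y <= n - #|W|)%N.
Proof. by move/subset_leq_card/(leq_sub2l n); rewrite hammingE. Qed.

Lemma hweightE x : hweight x = (n - #|zero_set x|)%N.
Proof.
rewrite /hweight hammingE; congr (_ - _)%N.
by apply: eq_card => j; rewrite !inE mxE.
Qed.

Lemma min_distance_le C d : has_min_distance C d -> (d <= n)%N.
Proof. by move=> [_ [c _ <-]]; rewrite hweightE leq_subr. Qed.

Lemma min_distance_zero_set C d c :
  has_min_distance C d -> c \in C -> c != 0 -> (#|zero_set c| <= n - d)%N.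
Proof.
move=> [dmin _] cC c_neq0; have := dmin c cC c_neq0; rewrite hweightE.
by have := max_card (zero_set c); rewrite card_ord; lia.
Qed.

Lemma vspace_vanishing C S :
  (#|S| < \dim C)%N -> exists2 c, c \in C & (c != 0) && (S \subset zero_set c).
Proof.
move=> lt_S_C.
pose f (c : 'rV[F]_n) : 'rV[F]_#|S| := \row_i c ord0 (enum_val i).
have f_lin : linear f by move=> a x y; apply/rowP => i; rewrite !mxE.
pose g : {linear 'rV[F]_n -> 'rV[F]_#|S|} :=
  HB.pack f (GRing.isLinear.Build _ _ _ _ f f_lin).
pose h := linfun g.
have le_img : (\dim (h @: C) <= #|S|)%N.
  by rewrite (leq_trans (dimvS (subvf _))) // dimvf /dim /= mul1n.
have ker_neq0 : (C :&: lker h)%VS != 0%VS.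
  rewrite -dimv_eq0; apply: contraTneq lt_S_C => ker0.
  by rewrite -(limg_ker_dim h C) ker0 add0n -leqNgt.
have := memv_pick (C :&: lker h)%VS; rewrite memv_cap memv_ker => /andP[cC /eqP hc0].
exists (vpick (C :&: lker h)); rewrite // vpick0 ker_neq0 /=.
apply/subsetP => j jS; rewrite inE.
move/rowP/(_ (enum_rank_in jS j)): hc0.
by rewrite lfunE !mxE enum_rankK_in // => ->.
Qed.

Variables (C : {vspace 'rV[F]_n}) (k : nat).
Hypothesis C_MDS : is_MDS C k.

Lemma MDS_dim_gt0 : (0 < k)%N.
Proof. by case: C_MDS => _ /min_distance_le; lia. Qed.

Lemma MDS_zero_set c : c \in C -> c != 0 -> (#|zero_set c| <= k - 1)%N.
Proof.
by move=> cC c_neq0; case: C_MDS => _ /min_distance_zero_set/(_ cC c_neq0); lia.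
Qed.

Lemma MDS_zero_set_eq c S1 S2 :
  c \in C -> c != 0 -> #|S1| = (k - 1)%N -> #|S2| = (k - 1)%N ->
  S1 \subset zero_set c -> S2 \subset zero_set c -> S1 = S2.
Proof.
move=> cC c_neq0 S1k S2k S1z S2z.
have le_U : (#|S1 :|: S2| <= k - 1)%N.
  by rewrite (leq_trans _ (MDS_zero_set cC c_neq0)) // subset_leq_card // subUset S1z.
have U_eq (Si : {set 'I_n}) : #|Si| = (k - 1)%N -> Si \subset S1 :|: S2 -> Si = S1 :|: S2.
  by move=> Sik sub; apply/eqP; rewrite eqEcard sub Sik.
by rewrite [LHS]U_eq ?subsetUl // [RHS]U_eq ?subsetUr.
Qed.

Lemma MDS_unit_codeword S j0 :
  #|S| = (k - 1)%N -> j0 \notin S ->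
  exists2 c, c \in C & (S \subset zero_set c) && (c ord0 j0 == 1).
Proof.
move=> Sk j0S; have k_gt0 := MDS_dim_gt0.
have [c cC /andP[c_neq0 Sz]] : exists2 c, c \in C & (c != 0) && (S \subset zero_set c).
  by apply: vspace_vanishing; rewrite C_MDS.1 Sk; lia.
have cj0_neq0 : c ord0 j0 != 0.
  apply: contraTneq (MDS_zero_set cC c_neq0) => cj0; rewrite -ltnNge.
  have : j0 |: S \subset zero_set c by rewrite subUset sub1set inE cj0 eqxx.
  by move/subset_leq_card; rewrite cardsU1 j0S Sk; lia.
exists ((c ord0 j0)^-1 *: c); first exact: memvZ.
rewrite mxE mulVf // eqxx andbT.
by apply/subsetP => j /(subsetP Sz); rewrite !inE mxE => /eqP->; rewrite mulr0.
Qed.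

End Codewords.

Section ReceivedWord.

Variables (F : finFieldType) (n k L u r : nat) (C : {vspace 'rV[F]_n}).
Hypothesis C_MDS : is_MDS C k.
Let k_gt0 : (0 < k)%N := MDS_dim_gt0 C_MDS.
Variable pos : 'I_n.
Hypotheses (pos_eq : pos = (k - 1 + u + r)%N :> nat) (n_eq : n = (pos.+1 + L * u)%N).
Variables (S : 'I_L -> {set 'I_n}) (cw : 'I_L -> 'rV[F]_n).
Hypotheses (S_inj : injective S) (S_prefix : forall i, S i \subset [set j : 'I_n | (j < pos)%N])
  (card_S : forall i, #|S i| = (k - 1)%N) (cw_C : forall i, cw i \in C)
  (cw_zero : forall i, S i \subset zero_set (cw i)) (cw_pos : forall i, cw i ord0 pos = 1).

Definition block (i : 'I_L) : {set 'I_n} :=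
  [set j : 'I_n | (pos.+1 + i * u <= j < pos.+1 + i * u + u)%N].

Lemma block_index i j : j \in block i -> ((j - pos.+1) %/ u)%N = i.
Proof.
rewrite inE => /andP[le_j lt_j].
rewrite (_ : (j - pos.+1 = i * u + (j - pos.+1 - i * u))%N); last lia.
by rewrite divnMDl ?divn_small ?addn0 //; lia.
Qed.

Lemma card_block i : #|block i| = u.
Proof.
rewrite card_ord_itv; first lia.
have : (i.+1 * u <= L * u)%N by rewrite leq_mul2r ltn_ord orbT.
by rewrite mulSn; lia.
Qed.

Definition received : 'rV[F]_n := \row_j
  if (j < pos)%N then 0 else if j == pos then 1
  else if [pick i | j \in block i] is Some i then cw i ord0 j else 0.

Lemma received_block i j : j \in block i -> received ord0 j = cw i ord0 j.
Proof.
move=> j_i; have := j_i; rewrite mxE inE => /andP[le_j _].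
rewrite ifF ?ifF -?val_eqE /=; [| lia | lia].
case: pickP => [i' j_i' | /(_ i)]; last by rewrite j_i.
by congr (cw _ _ _); apply: val_inj; rewrite /= -(block_index j_i) (block_index j_i').
Qed.

Lemma hamming_0_received : (hamming 0 received <= L * u + 1)%N.
Proof.
apply: leq_trans (hamming_le_agree (W := [set j : 'I_n | (j < pos)%N]) _) _.
  by apply/subsetP => j; rewrite !inE !mxE => ->.
by rewrite card_ord_lt; lia.
Qed.

Lemma hamming_cw_received i : (hamming (cw i) received <= L * u + r)%N.
Proof.
pose W := S i :|: (pos |: block i).
have pos_block : pos \notin block i by rewrite inE; lia.
have S_disj : S i :&: (pos |: block i) = set0.
  apply/setP => j; rewrite !inE; apply/negbTE/negP => /andP[/(subsetP (S_prefix i))].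
  by rewrite !inE -val_eqE /=; lia.
have card_W : #|W| = (k + u)%N.
  by rewrite cardsU S_disj cards0 subn0 cardsU1 pos_block card_block card_S; lia.
apply: leq_trans (hamming_le_agree (W := W) _) _; last by rewrite card_W; lia.
apply/subsetP => j; rewrite !in_setU in_set1 => /orP[j_S | /orP[/eqP-> | j_i]]; rewrite inE.
- have := subsetP (S_prefix i) j j_S; have := subsetP (cw_zero i) j j_S.
  by rewrite !inE /received mxE => /eqP-> ->.
- by rewrite cw_pos /received mxE ltnn eqxx.
- by rewrite (received_block j_i).
Qed.

Lemma cw_neq0 i : cw i != 0.
Proof. by apply: contra_neq (@oner_neq0 F) => cw0; rewrite -(cw_pos i) cw0 mxE. Qed.

Lemma cw_inj : injective cw.
Proof.
move=> i i' eq_cw; apply: S_inj.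
by apply: (MDS_zero_set_eq C_MDS (cw_C i) (cw_neq0 i)); rewrite ?card_S // eq_cw.
Qed.

Lemma received_ball_card tau :
  (0 < r)%N -> (L * u + r <= tau)%N ->
  (L < #|[set c : 'rV[F]_n | (c \in C) && (hamming c received <= tau)]|)%N.
Proof.
move=> r_gt0 le_tau; pose Y := 0 |: [set cw i | i : 'I_L].
have card_Y : #|Y| = L.+1.
  rewrite cardsU1 card_imset ?card_ord; last exact: cw_inj.
  by case: imsetP => // -[i _ /esym/eqP]; rewrite (negbTE (cw_neq0 i)).
rewrite -card_Y subset_leq_card //; apply/subsetP => c; rewrite !inE.
case/orP => [/eqP-> | /imsetP[i _ ->]].
  by rewrite mem0v (leq_trans hamming_0_received) //; lia.
by rewrite cw_C (leq_trans (hamming_cw_received i)).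
Qed.

End ReceivedWord.

Lemma MDS_list_decoding_radius_lt (F : finFieldType) (n k L u r tau : nat)
    (C : {vspace 'rV[F]_n}) :
  is_MDS C k -> (n - k = (L + 1) * u + r)%N -> (0 < r)%N ->
  (L <= 'C(k - 1 + u + r, k - 1))%N ->
  list_decodable (fun c => c \in C) tau L -> (tau < L * u + r)%N.
Proof.
move=> C_MDS n_k r_gt0 le_L_bin LD; rewrite ltnNge; apply/negP => le_tau.
have k_gt0 := MDS_dim_gt0 C_MDS.
have lt_pos_n : (k - 1 + u + r < n)%N by lia.
pose pos : 'I_n := Ordinal lt_pos_n.
pose A := [set j : 'I_n | (j < pos)%N].
have card_A : #|A| = (k - 1 + u + r)%N.
  exact/card_ord_lt/ltnW.
have [S [S_inj S_A]] : exists S : 'I_L -> {set 'I_n},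
    injective S /\ forall i, S i \subset A /\ #|S i| = (k - 1)%N.
  by apply: draws_family; rewrite card_A.
have pos_S i : pos \notin S i by apply/negP => /(subsetP (S_A i).1); rewrite inE ltnn.
have cw_ex i : exists c : 'rV[F]_n,
    c \in C /\ (S i \subset zero_set c) && (c ord0 pos == 1).
  by have [c cC cP] := MDS_unit_codeword C_MDS (S_A i).2 (pos_S i); exists c.
have [cw cwP] := fin_all_exists cw_ex.
have := LD (received u pos cw); apply/negP; rewrite -ltnNge.
apply: (received_ball_card (r := r) C_MDS (pos := pos) erefl _ S_inj) => //.
- by rewrite /=; lia.
- by move=> i; case: (S_A i).
- by move=> i; case: (S_A i).
- by move=> i; case: (cwP i).
- by move=> i; case: (cwP i) => _ /andP[].
- by move=> i; case: (cwP i) => _ /andP[_ /eqP].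
Qed.

Theorem mainTheorem4 (F : finFieldType) (n k L u r tau : nat)
    (C : {vspace 'rV[F]_n}) :
  (0 < L)%N ->
  is_MDS C k ->
  (k < n)%N ->
  (n - k = (L + 1) * u + r)%N ->
  (1 <= r <= L + 1)%N ->
  (L <= 'C(k - 1 + u + r, k - 1))%N ->
  list_decodable (fun c => c \in C) tau L ->
  (tau%:R : rat) <= (L * (n - k))%:R / (L + 1)%:R.
Proof.
move=> _ C_MDS _ n_k /andP[r_gt0 le_r] le_L_bin LD.
have lt_tau := MDS_list_decoding_radius_lt C_MDS n_k r_gt0 le_L_bin LD.
rewrite ler_pdivlMr ?ltr0n ?addn1 // -natrM ler_nat n_k.
nia.
Qed.
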